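(* Let $s\in[-\infty,0]$, let $\rho$ be a $2\times2$ density matrix and $X,Y$ be $2\times2$ Hermitian matrices. Define $\mathcal{I}_\rho^s(X,Y)=I^s(\rho,X)I^s(\rho,Y)-\frac1{16}\left[I^s(\rho,X+Y)-I^s(\rho,X-Y)\right]^2.$ Then $0\le\mathcal{I}_\rho^s(X,Y)\le\frac14\left|\mathrm{Tr}\big[\rho[X,Y]\big]\right|^2$.
   Context: Write $\rho=\sum_{i=1}^2\lambda_i|\psi_i\rangle\langle\psi_i|$ (orthonormal eigenbasis, $\lambda_1\ge\lambda_2\ge0$). For $-\infty<s<0$ and $a_1,a_2>0$ let $m_s(a_1,a_2)=\left(\frac{a_1^s+a_2^s}{2}\right)^{1/s}$; $m_0(a_1,a_2)=\sqrt{a_1a_2}$; $m_{-\infty}(a_1,a_2)=\min\{a_1,a_2\}$; and $m_s(a,0)=m_s(0,a)=m_s(0,0)=0$. Define $\zeta_\rho^s(X,Y)=\mathrm{Tr}[\rho X^\dagger Y]-\sum_{i,j} m_s(\lambda_i,\lambda_j)\langle\psi_i|X^\dagger|\psi_j\rangle\langle\psi_j|Y|\psi_i\rangle$ and $I^s(\rho,X)=\zeta_\rho^s(X,X)$. $[X,Y]=XY-YX$. *)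

From HB Require Import structures.
From mathcomp Require Import all_boot all_order all_algebra.
From mathcomp Require Import all_classical all_reals all_analysis.
From mathcomp Require Import complex.
Set Implicit Arguments. Unset Strict Implicit. Unset Printing Implicit Defensive.
Import Order.TTheory GRing.Theory Num.Theory.
Local Open Scope ring_scope.

Definition adj (R : rcfType) (m n : nat) (A : 'M[R[i]]_(m, n)) : 'M[R[i]]_(n, m) :=
  (map_mx (fun z => z^*) A)^T.

(* the mean m_s(a1,a2), s in [-oo,0]; m_s(a,0)=m_s(0,a)=m_s(0,0)=0.
   (The +oo branch is never used: s <= 0 is assumed.) *)
Definition mean_s (R : realType) (s : \bar R) (a1 a2 : R) : R :=
  if (a1 == 0) || (a2 == 0) then 0 else
  match s with
  | -oo%E => Num.min a1 a2
  | (t%:E)%E => if t == 0 then Num.sqrt (a1 * a2)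
                else powR ((powR a1 t + powR a2 t) / 2) t^-1
  | +oo%E => 0
  end.

(* zeta_rho^s(X,Y) computed from the spectral decomposition
   rho = sum_i lam i |psi i><psi i| *)
Definition zeta (R : realType) (s : \bar R) (rho : 'M[R[i]]_2)
  (lam : 'I_2 -> R) (psi : 'I_2 -> 'cV[R[i]]_2) (X Y : 'M[R[i]]_2) : R[i] :=
  \tr (rho *m adj X *m Y)
  - \sum_(i < 2) \sum_(j < 2)
      ((mean_s s (lam i) (lam j))%:C)%C
      * (adj (psi i) *m adj X *m psi j) 0 0
      * (adj (psi j) *m Y *m psi i) 0 0.

Definition Is (R : realType) (s : \bar R) (rho : 'M[R[i]]_2)
  (lam : 'I_2 -> R) (psi : 'I_2 -> 'cV[R[i]]_2) (X : 'M[R[i]]_2) : R[i] :=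
  zeta s rho lam psi X X.

Definition calI (R : realType) (s : \bar R) (rho : 'M[R[i]]_2)
  (lam : 'I_2 -> R) (psi : 'I_2 -> 'cV[R[i]]_2) (X Y : 'M[R[i]]_2) : R[i] :=
  Is s rho lam psi X * Is s rho lam psi Y
  - 16^-1 * (Is s rho lam psi (X + Y) - Is s rho lam psi (X - Y)) ^+ 2.

Definition is_hermitian (R : rcfType) (n : nat) (A : 'M[R[i]]_n) : Prop := adj A = A.

Definition density_matrix (R : rcfType) (n : nat) (A : 'M[R[i]]_n) : Prop :=
  [/\ is_hermitian A, (forall v : 'cV[R[i]]_n, 0 <= (adj v *m A *m v) 0 0)
    & \tr A = 1].

From HB Require Import structures.
From mathcomp Require Import all_boot all_order all_algebra.
From mathcomp Require Import all_classical all_reals all_analysis.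
From mathcomp Require Import complex.
From mathcomp Require Import lra ring.
Set Implicit Arguments. Unset Strict Implicit. Unset Printing Implicit Defensive.
Import Order.TTheory GRing.Theory Num.Theory.
Local Open Scope ring_scope.

(* Work in the eigenbasis psi of rho and write x, y for the off-diagonal entries
   <psi_0|X|psi_1>, <psi_0|Y|psi_1>.  Since m_s(a,a) = a the diagonal terms of
   I^s cancel, so I^s(rho,Z) = c |<psi_0|Z|psi_1>|^2 with
   c = lam_0 + lam_1 - 2 m_s(lam_0,lam_1), while Tr(rho[X,Y]) = (lam_0 - lam_1) w
   with w = x y^* - x^* y.  By polarization the quantity of the theorem is
   c^2 (|x|^2 |y|^2 - (Re x y^* )^2) = c^2 |w|^2 / 4, and lam_1 <= m_s <= lam_0
   gives |c| <= lam_0 - lam_1. *)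

Section PowerMeans.
Variable R : realType.
Implicit Types (a b x y t : R).

Lemma lt0_ger_powR t x y : t < 0 -> 0 < x -> x <= y -> y `^ t <= x `^ t.
Proof.
move=> t_lt0 x_gt0 le_xy; have y_gt0 := lt_le_trans x_gt0 le_xy.
rewrite /powR !gt_eqF // ler_expR ler_nM2l // ler_ln // posrE.
Qed.

Lemma power_mean_bounds t a b : t < 0 -> 0 < b -> b <= a ->
  b <= ((a `^ t + b `^ t) / 2) `^ t^-1 <= a.
Proof.
move=> t_lt0 b_gt0 le_ba; have a_gt0 := lt_le_trans b_gt0 le_ba.
have tV_lt0 : t^-1 < 0 by rewrite invr_lt0.
have powRK x : 0 < x -> (x `^ t) `^ t^-1 = x.
  by move=> x_gt0; rewrite -powRrM mulfV ?lt_eqF // powRr1 ?ltW.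
have le_powR_ab := lt0_ger_powR t_lt0 b_gt0 le_ba.
have ge_mean : a `^ t <= (a `^ t + b `^ t) / 2.
  by rewrite ler_pdivlMr // mulr_natr mulr2n lerD2l.
have le_mean : (a `^ t + b `^ t) / 2 <= b `^ t.
  by rewrite ler_pdivrMr // mulr_natr mulr2n lerD2r.
have powR_a_gt0 : 0 < a `^ t by exact: powR_gt0.
rewrite -{1}(powRK b) // -{3}(powRK a) //.
by rewrite !lt0_ger_powR // (lt_le_trans powR_a_gt0).
Qed.

Lemma geometric_mean_bounds a b : 0 <= b -> b <= a -> b <= Num.sqrt (a * b) <= a.
Proof.
move=> b_ge0 le_ba; have a_ge0 := le_trans b_ge0 le_ba.
rewrite -{1}(ger0_norm b_ge0) -{3}(ger0_norm a_ge0) -!sqrtr_sqr.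
rewrite !ler_sqrt ?sqr_ge0 ?mulr_ge0 // !expr2.
by rewrite ler_wpM2r // ler_wpM2l.
Qed.
End PowerMeans.

Section MeanS.
Variables (R : realType) (s : \bar R).
Hypothesis s_le0 : (s <= 0)%E.

Lemma mean_s_bounds (a b : R) : 0 <= b -> b <= a -> b <= mean_s s a b <= a.
Proof.
move=> b_ge0 le_ba; rewrite /mean_s.
have [/orP[]/eqP ab0|/norP[a_neq0 b_neq0]] := boolP ((a == 0) || (b == 0)).
- by rewrite -ab0 le_ba lexx.
- by rewrite ab0 lexx -ab0 le_ba.
have b_gt0 : 0 < b by rewrite lt_def b_neq0.
case: s s_le0 => [t||] //; rewrite ?lee_fin => t_le0.
- have [_|t_neq0] := eqVneq t 0; first exact: geometric_mean_bounds.
  by apply: power_mean_bounds => //; rewrite lt_neqAle t_neq0.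
- by rewrite ge_min le_min lexx le_ba orbT.
Qed.

Lemma mean_s_id (a : R) : 0 <= a -> mean_s s a a = a.
Proof.
by move=> a_ge0; apply/le_anti; have /andP[-> ->] := mean_s_bounds a_ge0 (lexx a).
Qed.

Lemma mean_sC (a b : R) : mean_s s a b = mean_s s b a.
Proof.
rewrite /mean_s orbC; case: ifP => // _.
case: s => [t||].
- by rewrite (addrC (a `^ t)) (mulrC a).
- by [].
- exact: minC.
Qed.
End MeanS.

Section Adjoint.
Variable R : rcfType.
Implicit Types (m n p : nat).

Lemma adj_mul m n p (A : 'M[R[i]]_(m, n)) (B : 'M[R[i]]_(n, p)) :
  adj (A *m B) = adj B *m adj A.
Proof.
apply/matrixP => a b; rewrite !mxE rmorph_sum; apply: eq_bigr => k _.
by rewrite !mxE rmorphM mulrC.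
Qed.

Lemma adjK m n (A : 'M[R[i]]_(m, n)) : adj (adj A) = A.
Proof. by apply/matrixP => a b; rewrite !mxE conjCK. Qed.

Lemma adjD m n (A B : 'M[R[i]]_(m, n)) : adj (A + B) = adj A + adj B.
Proof. by apply/matrixP => a b; rewrite !mxE rmorphD. Qed.

Lemma adjB m n (A B : 'M[R[i]]_(m, n)) : adj (A - B) = adj A - adj B.
Proof. by apply/matrixP => a b; rewrite !mxE rmorphB. Qed.

Lemma adj_mx11 (A : 'M[R[i]]_1) : adj A 0 0 = (A 0 0)^*.
Proof. by rewrite !mxE. Qed.
End Adjoint.

Section OrthonormalBasis.
Variables (R : rcfType) (n : nat) (psi : 'I_n -> 'cV[R[i]]_n).
Hypothesis psi_orthonormal : forall i j, (adj (psi i) *m psi j) 0 0 = (i == j)%:R.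

Definition braket i (Z : 'M[R[i]]_n) j := (adj (psi i) *m Z *m psi j) 0 0.

Lemma sum_outer_orthonormal : \sum_(j < n) psi j *m adj (psi j) = 1%:M.
Proof.
pose U : 'M[R[i]]_n := \matrix_(a, j) psi j a 0.
have UU : adj U *m U = 1%:M.
  apply/matrixP => a b; rewrite !mxE -psi_orthonormal mxE.
  by apply: eq_bigr => k _; rewrite !mxE.
rewrite -(mulmx1C UU); apply/matrixP => a b; rewrite summxE mxE.
by apply: eq_bigr => k _; rewrite !mxE big_ord1 !mxE.
Qed.

Lemma braket_adj i j Z : adj Z = Z -> braket j Z i = (braket i Z j)^*.
Proof. by move=> ZH; rewrite /braket -adj_mx11 !adj_mul adjK ZH mulmxA. Qed.

Lemma braketD i j Z W : braket i (Z + W) j = braket i Z j + braket i W j.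
Proof. by rewrite /braket mulmxDr mulmxDl mxE. Qed.

Lemma braketB i j Z W : braket i (Z - W) j = braket i Z j - braket i W j.
Proof. by rewrite /braket mulmxBr mulmxBl !mxE. Qed.

Lemma mxtrace_spectral (lam : 'I_n -> R) Z W :
  \tr ((\sum_i (lam i)%:C%C *: (psi i *m adj (psi i))) *m Z *m W)
  = \sum_i (lam i)%:C%C * \sum_j braket i Z j * braket j W i.
Proof.
rewrite !mulmx_suml (big_morph _ (@mxtraceD _ _) (mxtrace0 _ _)); apply: eq_bigr => i _.
rewrite -!scalemxAl mxtraceZ; congr (_ * _).
rewrite -!mulmxA mxtrace_mulC /mxtrace big_ord1.
rewrite -{1}[W]mul1mx -sum_outer_orthonormal !mulmx_suml !mulmx_sumr mulmx_suml summxE.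
apply: eq_bigr => j _.
by rewrite /braket !mulmxA -(mulmxA _ (adj (psi j))) -(mulmxA _ (adj (psi j) *m W)) mxE big_ord1.
Qed.
End OrthonormalBasis.

Lemma sum_ord2 (V : nmodType) (F : 'I_2 -> V) : \sum_i F i = F ord0 + F ord_max.
Proof. by rewrite big_ord_recr big_ord1; congr (F _ + _); apply: val_inj. Qed.

Lemma polarization_defect (C : numClosedFieldType) (c x y : C) :
  c * `|x| ^+ 2 * (c * `|y| ^+ 2) - 16^-1 * (c * `|x + y| ^+ 2 - c * `|x - y| ^+ 2) ^+ 2
  = 4^-1 * (c ^+ 2 * `|x * y^* - x^* * y| ^+ 2).
Proof. by rewrite !normCK !(rmorphD, rmorphN, rmorphM) /= !conjCK; field. Qed.

Definition Is_weight (R : realType) (s : \bar R) (lam : 'I_2 -> R) : R :=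
  lam ord0 + lam ord_max - 2 * mean_s s (lam ord0) (lam ord_max).

Section TwoLevel.
Variables (R : realType) (s : \bar R) (lam : 'I_2 -> R) (psi : 'I_2 -> 'cV[R[i]]_2).
Hypothesis s_le0 : (s <= 0)%E.
Hypothesis psi_orthonormal : forall i j, (adj (psi i) *m psi j) 0 0 = (i == j)%:R.
Hypothesis lam_sorted : lam ord_max <= lam ord0.
Hypothesis lam1_ge0 : 0 <= lam ord_max.

Let rho := \sum_i (lam i)%:C%C *: (psi i *m adj (psi i)).

Lemma zeta_spectral X Y :
  zeta s rho lam psi X Y
  = \sum_i \sum_j ((lam i)%:C%C - (mean_s s (lam i) (lam j))%:C%C)
      * braket psi i (adj X) j * braket psi j Y i.
Proof.
rewrite /zeta mxtrace_spectral // -sumrB.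
apply: eq_bigr => i _; rewrite mulr_sumr -sumrB; apply: eq_bigr => j _.
by rewrite /braket mulrBl mulrBl mulrA.
Qed.

Lemma Is_two_level Z : adj Z = Z ->
  Is s rho lam psi Z = (Is_weight s lam)%:C%C * `|braket psi ord0 Z ord_max| ^+ 2.
Proof.
move=> ZH; rewrite /Is zeta_spectral // ZH !sum_ord2 (braket_adj psi ord0 ord_max ZH) normCK.
rewrite (mean_sC s (lam ord_max)) !mean_s_id // ?(le_trans lam1_ge0) // /Is_weight.
by rewrite rmorphB rmorphD rmorphM /=; ring.
Qed.

Lemma mxtrace_commutator X Y : adj X = X -> adj Y = Y ->
  \tr (rho *m (X *m Y - Y *m X))
  = (lam ord0 - lam ord_max)%:C%C
    * (braket psi ord0 X ord_max * (braket psi ord0 Y ord_max)^*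
       - (braket psi ord0 X ord_max)^* * braket psi ord0 Y ord_max).
Proof.
move=> XH YH; rewrite mulmxBr !mulmxA raddfB /= !mxtrace_spectral // !sum_ord2.
by rewrite (braket_adj psi ord0 ord_max XH) (braket_adj psi ord0 ord_max YH) rmorphB /=; ring.
Qed.

Lemma Is_weight_sqr_bounds :
  0 <= (Is_weight s lam)%:C%C ^+ 2 <= `|(lam ord0 - lam ord_max)%:C%C| ^+ 2.
Proof.
have /andP[m_ge m_le] := mean_s_bounds s_le0 lam1_ge0 lam_sorted.
rewrite ger0_norm ?ler0c ?subr_ge0 // -!rmorphXn ler0c lecR sqr_ge0 /Is_weight /=.
by nra.
Qed.
End TwoLevel.

Theorem corollary1 (R : realType) (s : \bar R) (hs : (s <= 0)%E)
  (rho X Y : 'M[R[i]]_2) (lam : 'I_2 -> R) (psi : 'I_2 -> 'cV[R[i]]_2)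
  (hrho : density_matrix rho)
  (hpsi : forall i j : 'I_2, (adj (psi i) *m psi j) 0 0 = (i == j)%:R)
  (hlam : lam ord_max <= lam ord0) (hlam0 : 0 <= lam ord_max)
  (hdec : rho = \sum_(i < 2) ((lam i)%:C)%C *: (psi i *m adj (psi i)))
  (hX : is_hermitian X) (hY : is_hermitian Y) :
  0 <= calI s rho lam psi X Y /\
  calI s rho lam psi X Y
    <= 4^-1 * `| \tr (rho *m (X *m Y - Y *m X)) | ^+ 2.
Proof.
have hXpY : is_hermitian (X + Y) by rewrite /is_hermitian adjD hX hY.
have hXmY : is_hermitian (X - Y) by rewrite /is_hermitian adjB hX hY.
rewrite /calI hdec !Is_two_level // mxtrace_commutator // braketB braketD.
rewrite polarization_defect normrM exprMn; set w := `|_ - _| ^+ 2.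
have w_ge0 : 0 <= w by rewrite exprn_ge0.
have /andP[c_ge0 c_le] := Is_weight_sqr_bounds hs hlam hlam0.
have quarter_gt0 : 0 < 4^-1 :> R[i] by rewrite invr_gt0 ltr0n.
split; first by rewrite pmulr_rge0 // mulr_ge0.
by rewrite ler_pM2l // ler_wpM2r.
Qed.
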